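(* Let $S$ be a semigroup and $p$ an ultrafilter on $S$. If $p$ is a regular strongly productive ultrafilter, then $p$ is idempotent.
   Context: For a sequence $\vec{x}=(x_n)_{n\in\omega}$ in $S$, $\mathrm{FP}(\vec{x})$ is the set of all products $\prod_{i\in a}x_i$ (in increasing order of indices), $a$ ranging over finite nonempty subsets of $\omega$, and $\mathrm{FP}_k(\vec{x})=\mathrm{FP}((x_{n+k})_{n\in\omega})$. An ultrafilter $p$ on $S$ is strongly productive if every $A\in p$ contains some $\mathrm{FP}(\vec{x})$ which belongs to $p$. A nonprincipal strongly productive ultrafilter $p$ is regular if there is $B\in p$ such that for every sequence $\vec{x}$ with $\mathrm{FP}(\vec{x})\subseteq B$, the set $x_0\mathrm{FP}_1(\vec{x})$ does not belong to $p$. An ultrafilter $p$ is idempotent if for every $A\in p$ the set $\{x\in S: x^{-1}A\in p\}$ belongs to $p$, where $x^{-1}A=\{y\in S: xy\in A\}$. *)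

Set Implicit Arguments.
From Stdlib Require Import List Arith Sorted.
Import ListNotations.

Section Defs.
Variable S : Type.
Variable op : S -> S -> S.

Definition subset (A B : S -> Prop) : Prop := forall x, A x -> B x.

Definition ultrafilter (p : (S -> Prop) -> Prop) : Prop :=
  p (fun _ => True) /\
  ~ p (fun _ => False) /\
  (forall A B, p A -> subset A B -> p B) /\
  (forall A B, p A -> p B -> p (fun x => A x /\ B x)) /\
  (forall A, p A \/ p (fun x => ~ A x)).

Definition nonprincipal (p : (S -> Prop) -> Prop) : Prop :=
  forall a : S, ~ p (fun x => x = a).

Fixpoint prodl (x : nat -> S) (i : nat) (l : list nat) : S :=
  match l with
  | [] => x i
  | j :: l' => op (x i) (prodl x j l')
  end.

(* FP(x): products over finite nonempty subsets of omega, listed in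
   strictly increasing order of indices *)
Definition FP (x : nat -> S) : S -> Prop :=
  fun y => exists (i : nat) (l : list nat),
    Sorted lt (i :: l) /\ y = prodl x i l.

Definition FPk (k : nat) (x : nat -> S) : S -> Prop :=
  FP (fun n => x (n + k)).

Definition strongly_productive (p : (S -> Prop) -> Prop) : Prop :=
  forall A, p A -> exists x : nat -> S, subset (FP x) A /\ p (FP x).

Definition regular (p : (S -> Prop) -> Prop) : Prop :=
  nonprincipal p /\ strongly_productive p /\
  exists B, p B /\
    forall x : nat -> S, subset (FP x) B ->
      ~ p (fun z => exists y, FPk 1 x y /\ z = op (x 0) y).

Definition idempotent (p : (S -> Prop) -> Prop) : Prop :=
  forall A, p A -> p (fun x => p (fun y => A (op x y))).
End Defs.
Arguments ultrafilter {S} p.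
Arguments nonprincipal {S} p.

From Stdlib Require Import List Arith Sorted Lia.
Import ListNotations.
Set Implicit Arguments.

(* Let B witness regularity of p and let A be in p.  Strong productivity
   gives a sequence x with FP(x) in p and FP(x) contained in A and B.
   1. Every tail FP_k(x) also belongs to p.  Indeed, writing y for the
      k-th tail, FP(y) is the union of {y_0}, y_0 FP_1(y) and FP_1(y); the
      first part is not in p since p is nonprincipal, the second is not in
      p by regularity (FP(y) is contained in B), so FP_1(y) is in p.
   2. If a = x_i x_{j1} ... x_{jm} is in FP(x) and n exceeds all indices
      used, then a b is in FP(x) for every b in FP_n(x) (this uses
      associativity).  Hence FP_n(x) is contained in a^{-1}A, so a^{-1}A
      is in p for every a in FP(x), and {a | a^{-1}A in p} is in p.
   The file first develops the combinatorics of finite products (index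
   shifts, the decomposition of FP(y), concatenation), then the
   ultrafilter argument of step 1, and finally the theorem. *)

Lemma Sorted_map_in (P : nat -> Prop) (R : nat -> nat -> Prop) f l :
  Forall P l -> (forall a b, P a -> P b -> R a b -> R (f a) (f b)) ->
  Sorted R l -> Sorted R (map f l).
Proof.
  intros HP Hmono. induction l as [|a l IH]; intros Hs; simpl; constructor.
  - apply Sorted_inv in Hs as [Hs _]. inversion HP; subst. auto.
  - apply Sorted_inv in Hs as [_ Hh]. destruct l as [|b l]; simpl; constructor.
    inversion Hh; subst. inversion HP as [|? ? Pa HP']; subst.
    inversion HP'; subst. auto.
Qed.

Lemma Sorted_lt_shift k l : Sorted lt l -> Sorted lt (map (fun n => n + k) l).
Proof.
  apply (Sorted_map_in (P := fun _ => True)); [apply Forall_forall; auto | intros; lia].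
Qed.

Lemma Sorted_lt_head_le i l : Sorted lt (i :: l) -> Forall (fun n => i <= n) (i :: l).
Proof.
  intros Hs. apply Sorted_StronglySorted in Hs; [|intros ? ? ? ? ?; lia].
  apply StronglySorted_inv in Hs as [_ Hf]. constructor; [lia|].
  eapply Forall_impl; [|exact Hf]. simpl; intros; lia.
Qed.

Lemma Sorted_lt_app i l n j m :
  Sorted lt (i :: l) -> Forall (fun t => t <= n) (i :: l) ->
  n < j -> Sorted lt (j :: m) -> Sorted lt (i :: l ++ j :: m).
Proof.
  revert i; induction l as [|a l IH]; intros i Hs Hf Hn Hj; simpl.
  - constructor; auto. constructor. inversion Hf; lia.
  - apply Sorted_inv in Hs as [Hs Hh]. inversion Hh; subst. inversion Hf; subst.
    constructor; [apply IH; auto|]. constructor; auto.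
Qed.

Section FiniteProducts.
Variable S : Type.
Variable op : S -> S -> S.
Hypothesis op_assoc : forall a b c : S, op a (op b c) = op (op a b) c.

Lemma prodl_ext (f g : nat -> S) i l : (forall n, f n = g n) ->
  prodl op f i l = prodl op g i l.
Proof. intros H; revert i; induction l; intros i; simpl; rewrite H; [|rewrite IHl]; auto. Qed.

Lemma FP_ext (f g : nat -> S) : (forall n, f n = g n) -> subset (FP op f) (FP op g).
Proof.
  intros H z [i [l [Hs ->]]]. exists i, l. split; auto. apply prodl_ext; auto.
Qed.

Lemma prodl_shift_up (x : nat -> S) k i l :
  prodl op (fun n => x (n + k)) i l = prodl op x (i + k) (map (fun n => n + k) l).
Proof. revert i; induction l; intros i; simpl; [|rewrite IHl]; auto. Qed.

Lemma prodl_shift_down (x : nat -> S) k i l : Forall (fun n => k <= n) (i :: l) ->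
  prodl op (fun n => x (n + k)) (i - k) (map (fun n => n - k) l) = prodl op x i l.
Proof.
  revert i; induction l; intros i H; inversion H; subst; simpl.
  - f_equal; lia.
  - rewrite IHl by auto. replace (i - k + k) with i by lia. auto.
Qed.

Lemma FPk_sub_FP (x : nat -> S) k : subset (FPk op k x) (FP op x).
Proof.
  intros z [i [l [Hs ->]]]. exists (i + k), (map (fun n => n + k) l). split.
  - exact (Sorted_lt_shift k Hs).
  - apply prodl_shift_up.
Qed.

Lemma prodl_in_FPk (x : nat -> S) k i l : Sorted lt (i :: l) -> k <= i ->
  FPk op k x (prodl op x i l).
Proof.
  intros Hs Hk.
  assert (Hge : Forall (fun n => k <= n) (i :: l)).
  { eapply Forall_impl; [|exact (Sorted_lt_head_le Hs)]. simpl; intros; lia. }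
  exists (i - k), (map (fun n => n - k) l). split.
  - apply (Sorted_map_in (fun n => n - k) (P := fun n => k <= n) (l := i :: l)); auto.
    intros; lia.
  - symmetry; apply prodl_shift_down; auto.
Qed.

Lemma FP_decomp (y : nat -> S) z : FP op y z ->
  z = y 0 \/ (exists w, FPk op 1 y w /\ z = op (y 0) w) \/ FPk op 1 y z.
Proof.
  intros [i [l [Hs ->]]]. destruct i as [|i].
  - destruct l as [|j l]; [left; reflexivity|]. right; left.
    exists (prodl op y j l). split; [|reflexivity].
    apply Sorted_inv in Hs as [Hs Hh]. inversion Hh; subst.
    apply prodl_in_FPk; auto.
  - right; right. apply prodl_in_FPk; auto. lia.
Qed.

Lemma prodl_app (x : nat -> S) i l j m :
  prodl op x i (l ++ j :: m) = op (prodl op x i l) (prodl op x j m).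
Proof.
  revert i; induction l; intros i; simpl; auto.
  rewrite IHl, op_assoc; auto.
Qed.

(* Every a in FP(x) has a tail FP_n(x) with a FP_n(x) contained in FP(x):
   take n beyond all indices used by a and concatenate index lists.
   (The carrier is named S, so the successor is written Nat.succ.) *)
Lemma FP_left_mult_tail (x : nat -> S) a : FP op x a ->
  exists n, subset (FPk op n x) (fun b => FP op x (op a b)).
Proof.
  intros [i [l [Hs ->]]]. set (n := list_max (i :: l)).
  exists (Nat.succ n). intros b [j [m [Hs2 ->]]].
  rewrite prodl_shift_up, <- prodl_app.
  exists i, (l ++ (j + Nat.succ n) :: map (fun t => t + Nat.succ n) m). split; auto.
  apply Sorted_lt_app with (n := n); auto.
  - apply list_max_le. apply Nat.le_refl.
  - apply Nat.lt_lt_add_l, Nat.lt_succ_diag_r.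
  - apply (Sorted_lt_shift (Nat.succ n) Hs2).
Qed.
End FiniteProducts.

Lemma ultrafilter_cover3 (S : Type) (p : (S -> Prop) -> Prop) (A B C D : S -> Prop) :
  ultrafilter p -> p D -> ~ p A -> ~ p B ->
  subset D (fun z => A z \/ B z \/ C z) -> p C.
Proof.
  intros [_ [_ [Hup [Hint Hmax]]]] HD HA HB Hcov.
  destruct (Hmax A) as [|HnA]; [contradiction|].
  destruct (Hmax B) as [|HnB]; [contradiction|].
  eapply Hup; [exact (Hint _ _ (Hint _ _ HD HnA) HnB)|].
  intros z [[Hz HzA] HzB]. destruct (Hcov z Hz) as [|[|]]; tauto.
Qed.

Section RegularTails.
Variable S : Type.
Variable op : S -> S -> S.
Variable p : (S -> Prop) -> Prop.
Hypothesis Hultra : ultrafilter p.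
Hypothesis Hnonprincipal : nonprincipal p.
Variable B : S -> Prop.
Hypothesis HBregular : forall x : nat -> S, subset (FP op x) B ->
  ~ p (fun z => exists y, FPk op 1 x y /\ z = op (x 0) y).

Lemma regular_tail_step (y : nat -> S) :
  subset (FP op y) B -> p (FP op y) -> p (FPk op 1 y).
Proof.
  intros HyB Hy.
  apply (ultrafilter_cover3 _ _ (FPk op 1 y) Hultra Hy (Hnonprincipal (a := y 0)) (HBregular HyB)).
  intros z Hz. exact (FP_decomp Hz).
Qed.

Lemma regular_tails (x : nat -> S) :
  subset (FP op x) B -> p (FP op x) -> forall k, p (FPk op k x).
Proof.
  destruct Hultra as [_ [_ [Hup _]]].
  intros HxB Hx k. induction k as [|k IH].
  - eapply Hup; [exact Hx|]. apply FP_ext. intros; f_equal; lia.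
  - assert (HyB : subset (FPk op k x) B).
    { intros z Hz. exact (HxB z (FPk_sub_FP Hz)). }
    eapply Hup; [exact (regular_tail_step HyB IH)|].
    apply FP_ext. intros; f_equal; lia.
Qed.
End RegularTails.

Theorem mainTheorem3 (S : Type) (op : S -> S -> S)
  (op_assoc : forall a b c : S, op a (op b c) = op (op a b) c)
  (p : (S -> Prop) -> Prop)
  (Hultra : ultrafilter p)
  (Hreg : regular op p) :
  idempotent op p.
Proof.
  destruct Hreg as [Hnp [Hsp [B [HB HBreg]]]].
  pose proof Hultra as [_ [_ [Hup [Hint _]]]].
  intros A HA.
  destruct (Hsp (fun z => A z /\ B z) (Hint _ _ HA HB)) as [x [HxAB Hx]].
  assert (Htails : forall k, p (FPk op k x)).
  { apply (regular_tails Hultra Hnp HBreg); auto.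
    intros z Hz. apply (HxAB z Hz). }
  (* every a in FP(x) satisfies a^{-1}A in p, witnessed by a tail of x *)
  eapply Hup; [exact Hx|]. intros a Ha.
  destruct (FP_left_mult_tail op_assoc Ha) as [n Hn].
  eapply Hup; [exact (Htails n)|].
  intros b Hb. apply (HxAB _ (Hn b Hb)).
Qed.
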